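(* Let $g\ge1$ and $n\ge1$. For any $T_n\in\mathcal T_n$ there exists $\widehat T_n\in\mathcal T_n$ with $\hat w_n(\widehat T_n)>0$ such that $\widehat T_n$ covers $T_n$ and \[ C(T_n)\le C(\widehat T_n)\le (C(T_n)+1)L_{C(T_n),n}-1, \] where $L_{C,n}=\left\lceil\frac{\log n}{\lfloor\log(g+1)\rfloor}\right\rceil+1$ if $C=0$ and $L_{C,n}=\frac{\log\frac{n}{C+1}}{\lfloor\log(g+1)\rfloor}+2$ if $C\ge1$.
   Context: $\log$ is base 2. $\mathcal T_n$ is the set of transition paths $T=(t_1,\ldots,t_C;n)$ with $C\ge0$ and $1<t_1<\cdots<t_C\le n$; $C(T)=C$ is its number of switches. $\widehat T$ covers $T$ if every switch point of $T$ is a switch point of $\widehat T$. Weights: given switch probabilities $p(t|t')\in(0,1)$ for all $1\le t'<t$, let $U_1=1$ and $\Pr(U_t=t\mid U_{t-1}=t')=p(t|t')=1-\Pr(U_t=t'\mid U_{t-1}=t')$; a path $T\in\mathcal T_t$ corresponds to the realization jumping exactly at its switch points and $w_t(T)$ is its probability. Pruning with parameter $g$: write $s=o2^u$ with $o$ odd, $u\ge0$; $h_t(s)=1$ if $s\le t<s+g2^u$ and $0$ otherwise; $\hat p(t|t')=1-h_t(t')(1-p(t|t'))$; $\hat w_t$ is the Markov weight function defined from $\hat p$. *)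

From HB Require Import structures.
From mathcomp Require Import all_boot all_order all_algebra.
From mathcomp Require Import all_classical all_reals all_analysis.
Set Implicit Arguments. Unset Strict Implicit. Unset Printing Implicit Defensive.
Import Order.TTheory GRing.Theory Num.Theory.
Local Open Scope ring_scope.

(* Transition path T = (t_1,...,t_C; n) represented by the seq [:: t_1; ...; t_C]. *)
Definition is_tpath (n : nat) (s : seq nat) : bool :=
  sorted ltn s && all (fun t => (1 < t <= n)%N) s.

Definition nswitch (s : seq nat) : nat := size s.

Definition covers (Tcov T : seq nat) : Prop := {subset T <= Tcov}.

(* state U_{t-1} of the chain just before time t: last switch point < t, or 1 *)
Definition prev_state (s : seq nat) (t : nat) : nat :=
  last 1%N [seq x <- s | (x < t)%N].

(* Markov weight w_n(T) built from switch probabilities p(t|t') = p t t' *)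
Definition weight {R : realType} (p : nat -> nat -> R) (n : nat) (s : seq nat) : R :=
  \prod_(2 <= t < n.+1)
     (if t \in s then p t (prev_state s t) else 1 - p t (prev_state s t)).

(* h_t(s) with s = o 2^u, o odd : u = logn 2 s (2-adic valuation) *)
Definition hprune (g t s : nat) : bool :=
  (s <= t < s + g * 2 ^ logn 2 s)%N.

Definition phat {R : realType} (g : nat) (p : nat -> nat -> R) (t t' : nat) : R :=
  1 - (hprune g t t')%:R * (1 - p t t').

Definition log2 {R : realType} (x : R) : R := ln x / ln 2.

Definition Lbound {R : realType} (g C n : nat) : R :=
  let k : R := (Num.floor (log2 ((g.+1)%:R : R)))%:~R in
  if C == 0%N then (Num.ceil (log2 (n%:R : R) / k))%:~R + 1
  else log2 (n%:R / (C.+1)%:R : R) / k + 2.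

From HB Require Import structures.
From mathcomp Require Import all_boot all_order all_algebra.
From mathcomp Require Import all_classical all_reals all_analysis.
From mathcomp Require Import zify lra.
Import Order.TTheory GRing.Theory Num.Theory.
Set Implicit Arguments. Unset Strict Implicit. Unset Printing Implicit Defensive.

(* A state x = o 2^u survives pruning for g 2^u steps after it is entered, so the pruned
   weight of a path is positive as soon as every state, the initial state 1 included, is
   left within that window.  With k = floor(log(g+1)), refine each gap a < b between
   consecutive states by the points a_j = (least multiple of 2^(jk) that is >= a),
   j = 1, 2, ...: a_j is divisible by 2^(jk) and a_(j+1) - a_j <= (2^k - 1) 2^(jk)
   <= g 2^(jk), so every point is left in time, and about log(b - a)/k levels reach b.
   The C+1 gap lengths add up to n, so by AM-GM the logarithms add up to at most
   (C+1) log(n/(C+1)). *)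

Lemma path_next_within (f : nat -> nat) (x0 x : nat) (s : seq nat) :
  path (fun u v => u <= v <= u + f u) x0 s -> x \in x0 :: s -> x < last x0 s ->
  exists2 y, y \in s & x < y <= x + f x.
Proof.
elim: s x0 => [|y s IH] x0 /=; first by rewrite inE => _ /eqP ->; rewrite ltnn.
move=> /andP[/andP[x0y yx0] ys]; rewrite inE => /predU1P[ex|xs] xlt; last first.
  by have [z zs hz] := IH y ys xs xlt; exists z; rewrite // inE zs orbT.
case: (ltnP x0 y) => [x0y'|yx0']; first by exists y; rewrite ?mem_head ?ex ?x0y'.
have eyx : y = x by rewrite ex; apply/eqP; rewrite eqn_leq yx0'.
have [z zs hz] := IH y ys ltac:(by rewrite eyx mem_head) xlt.
by exists z; rewrite // inE zs orbT.
Qed.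

Lemma path_rcons_map_iota (r : rel nat) (c : nat -> nat) (b i N : nat) :
  (forall j, i <= j < i + N -> r (c j) (c j.+1)) -> r (c (i + N)) b ->
  path r (c i) (rcons [seq c j | j <- iota i.+1 N] b).
Proof.
elim: N i => [|N IH] i hstep hb /=; first by rewrite addn0 in hb; rewrite hb.
rewrite hstep; last by lia.
apply: IH; last by rewrite addSnnS.
by move=> j ji; apply: hstep; lia.
Qed.

(* The least multiple of [d] that is [>= a], provided [0 < a]. *)
Definition round_up (d a : nat) : nat := (a.-1 %/ d).+1 * d.

Lemma round_up_ge d a : 0 < d -> 0 < a -> a <= round_up d a.
Proof. by move=> d0 a0; have := ltn_ceil a.-1 d0; rewrite prednK. Qed.

Lemma dvdn_round_up d a : d %| round_up d a.
Proof. exact: dvdn_mull. Qed.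

Lemma round_up1 a : 0 < a -> round_up 1 a = a.
Proof. by move=> a0; rewrite /round_up divn1 muln1 prednK. Qed.

Lemma round_up_mulr d K a : 0 < d -> 0 < K ->
  round_up d a <= round_up (d * K) a <= round_up d a + (K - 1) * d.
Proof.
move=> d0 K0; rewrite /round_up.
have dK0 : 0 < d * K by rewrite muln_gt0 d0.
have := divn_eq a.-1 d; have := ltn_pmod a.-1 d0.
have := divn_eq a.-1 (d * K); have := ltn_pmod a.-1 dK0.
set q := a.-1 %/ d; set r := a.-1 %% d.
set Q := a.-1 %/ (d * K); set R := a.-1 %% (d * K) => hR eQ hr eq.
have qQ : q < Q.+1 * K by rewrite -(ltn_pmul2r d0); nia.
have Qq : Q * K < q.+1 by rewrite -(ltn_pmul2r d0); nia.
nia.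
Qed.

(* [hprune g t x] holds exactly when [x <= t < x + window_len g x]. *)
Definition window_len (g x : nat) : nat := g * 2 ^ logn 2 x.

Lemma leq_expn_logn e x : 0 < x -> 2 ^ e %| x -> 2 ^ e <= 2 ^ logn 2 x.
Proof. by move=> x0 hdvd; rewrite leq_pexp2l // -pfactor_dvdn. Qed.

Definition grid (k j a : nat) : nat := round_up (2 ^ (j * k)) a.

Definition fill (k a b : nat) : seq nat :=
  [seq x <- [seq grid k j a | j <- iota 1 (up_log (2 ^ k) (b - a))] | a < x < b].

Lemma size_fill k a b : size (fill k a b) <= up_log (2 ^ k) (b - a).
Proof. by rewrite size_filter (leq_trans (count_size _ _)) // size_map size_iota. Qed.

Lemma mem_fill k a b x : x \in fill k a b -> a < x < b.
Proof. by rewrite mem_filter => /andP[]. Qed.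

Section Fill.

Variables (g k a : nat).
Hypotheses (k_gt0 : 0 < k) (hk : 2 ^ k <= g.+1) (a_gt0 : 0 < a).

Lemma grid0 : grid k 0 a = a.
Proof. by rewrite /grid mul0n round_up1. Qed.

Lemma grid_ge j : a <= grid k j a.
Proof. by rewrite round_up_ge ?expn_gt0. Qed.

Lemma grid_window j : 2 ^ (j * k) * g <= window_len g (grid k j a).
Proof.
rewrite mulnC leq_mul2l leq_expn_logn ?orbT ?dvdn_round_up //.
exact: leq_trans a_gt0 (grid_ge j).
Qed.

Lemma grid_step j :
  grid k j a <= grid k j.+1 a <= grid k j a + window_len g (grid k j a).
Proof.
have := round_up_mulr a (expn_gt0 2 (j * k)) (expn_gt0 2 k).
rewrite -expnD addnC -mulSn => /andP[-> h] /=.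
apply: leq_trans h _; rewrite leq_add2l mulnC.
by apply: leq_trans (grid_window j); rewrite leq_mul2l leq_subLR add1n hk orbT.
Qed.

Lemma grid_cover N b :
  b - a <= 2 ^ (N * k) -> b <= grid k N a + window_len g (grid k N a).
Proof.
move=> hb; apply: leq_trans (leq_add (grid_ge N) (grid_window N)).
rewrite -leq_subLR (leq_trans hb) // leq_pmulr //.
by rewrite -ltnS (leq_trans _ hk) // -{1}(expn0 2) ltn_exp2l.
Qed.

(* Clipping at [b] keeps the chain monotone up to its last point [b]. *)
Lemma grid_chain b : a < b ->
  path (fun u v => u <= v <= u + window_len g u) a
    (rcons [seq minn (grid k j a) b | j <- iota 1 (up_log (2 ^ k) (b - a))] b).
Proof.
move=> ab; set N := up_log _ _.
have {1}<- : minn (grid k 0 a) b = a by rewrite grid0 (minn_idPl (ltnW ab)).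
apply: (@path_rcons_map_iota _ (fun j => minn (grid k j a) b)) => [j _ /=|/=].
  have /andP[h1 h2] := grid_step j; case: (ltnP (grid k j a) b) => hj.
    by rewrite leq_min h1 (ltnW hj) (leq_trans (geq_minl _ _)).
  by rewrite (minn_idPr (leq_trans hj h1)) leqnn leq_addr.
rewrite geq_minr; case: (ltnP (grid k N a) b) => hN //=; last by rewrite leq_addr.
rewrite grid_cover // mulnC expnM up_logP //.
by rewrite -{1}(expn0 2) ltn_exp2l.
Qed.

Lemma fill_next b x : a < b -> x \in a :: fill k a b ->
  exists2 y, y \in rcons (fill k a b) b & x < y <= x + window_len g x.
Proof.
move=> ab xin; have [xa xb] : a <= x /\ x < b.
  by case/predU1P: xin => [->|/mem_fill /andP[ax xb]]; split => //; apply: ltnW.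
have hx : x \in a :: rcons [seq minn (grid k j a) b | j <- iota 1 (up_log (2 ^ k) (b - a))] b.
  rewrite inE mem_rcons inE; move: xin; rewrite inE => /orP[/eqP->|]; first by rewrite eqxx.
  rewrite mem_filter => /andP[_ /mapP[j jN ej]].
  apply/orP; right; apply/orP; right; apply/mapP; exists j => //.
  by rewrite ej; apply/esym/minn_idPl/ltnW; rewrite -ej.
have [y ys hy] := path_next_within (grid_chain ab) hx ltac:(by rewrite last_rcons).
case: (ltnP y b) => yb; last first.
  by exists b; rewrite ?mem_rcons ?mem_head // xb (leq_trans yb) //; case/andP: hy.
exists y => //; rewrite mem_rcons inE (ltn_eqF yb) /= mem_filter yb andbT.
move: ys; rewrite mem_rcons inE (ltn_eqF yb) /= => /mapP[j jN ey].
have yj : y = grid k j a.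
  by move: yb; rewrite ey; case: (ltnP (grid k j a) b); rewrite ?ltnn.
rewrite (leq_ltn_trans xa) ?yj ?(map_f (grid k ^~ a) jN) //.
by case/andP: hy => + _; rewrite yj.
Qed.

End Fill.

(* [n.+1] stands for the end of the horizon. *)
Definition window_bounded (g n : nat) (s : seq nat) : Prop :=
  forall x, x \in 1 :: s -> exists2 y, y \in rcons s n.+1 & x < y <= x + window_len g x.

Lemma sorted_leq_last x0 s y : sorted leq s -> y \in s -> y <= last x0 s.
Proof.
move=> ss ys; rewrite -nth_last -{1}(nth_index x0 ys).
have s0 : 0 < size s by case: (s) ys.
apply: (sorted_leq_nth leq_trans leqnn) => //; rewrite ?inE ?index_mem ?prednK //.
by rewrite -ltnS prednK // index_mem.
Qed.

Lemma prev_state_in s t : prev_state s t \in 1 :: [seq x <- s | x < t].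
Proof. exact: mem_last. Qed.

Lemma prev_state_max s t y : sorted leq s -> y \in s -> y < t -> y <= prev_state s t.
Proof.
move=> ss ys yt; apply: sorted_leq_last; first exact: (sorted_filter leq_trans).
by rewrite mem_filter yt.
Qed.

Definition knot (n : nat) (T : seq nat) (i : nat) : nat := nth 0 (1 :: rcons T n.+1) i.

Definition cover_path (k n : nat) (T : seq nat) : seq nat :=
  sort leq (undup (T ++
    flatten [seq fill k (knot n T i) (knot n T i.+1) | i <- iota 0 (size T).+1])).

Lemma size_cover_path_le k n T : size (cover_path k n T) <=
  size T + \sum_(i < (size T).+1) up_log (2 ^ k) (knot n T i.+1 - knot n T i).
Proof.
rewrite size_sort (leq_trans (size_undup _)) // size_cat leq_add2l size_flatten.
rewrite sumnE /shape -map_comp big_map.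
rewrite (_ : iota 0 _ = index_iota 0 (size T).+1) ?big_mkord; last by rewrite /index_iota subn0.
by apply: leq_sum => i _; apply: size_fill.
Qed.

Section CoverPath.

Variables (g k n : nat) (T : seq nat).
Hypotheses (k_gt0 : 0 < k) (hk : 2 ^ k <= g.+1) (n_gt0 : 0 < n) (hT : is_tpath n T).

Lemma knots_sorted : sorted ltn (1 :: rcons T n.+1).
Proof.
case/andP: hT => sT bT; rewrite /= rcons_path path_sortedE; last exact: ltn_trans.
rewrite sT andbT; apply/andP; split; first by apply/allP => t /(allP bT) /andP[].
by have /predU1P[->|/(allP bT) /andP[_]] := mem_last 1 T; rewrite /= ltnS.
Qed.

Lemma knot_lt i j : i < j <= (size T).+1 -> knot n T i < knot n T j.
Proof.
move=> /andP[ij jT]; apply: (sorted_ltn_nth ltn_trans 0 knots_sorted) => //.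
  by rewrite inE /= size_rcons ltnS (leq_trans (ltnW ij)).
by rewrite inE /= size_rcons ltnS.
Qed.

Lemma knot_gt0 i : i <= (size T).+1 -> 0 < knot n T i.
Proof. by case: i => [//|i] iT; apply/ltnW/(@knot_lt 0); rewrite ltn0Sn. Qed.

Lemma knotE i : i <= size T -> knot n T i = nth 0 (1 :: T) i.
Proof. by case: i => [//|i] iT; rewrite /knot /= nth_rcons iT. Qed.

Lemma knot_last : knot n T (size T).+1 = n.+1.
Proof. by rewrite /knot /= nth_rcons ltnn eqxx. Qed.

Lemma knot_le_last i : i <= (size T).+1 -> knot n T i <= n.+1.
Proof.
rewrite -knot_last leq_eqVlt => /predU1P[-> //|iT].
by apply/ltnW/knot_lt; rewrite iT leqnn.
Qed.

Lemma knot_succ_mem i : i <= size T -> knot n T i.+1 \in rcons T n.+1.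
Proof. by move=> iT; rewrite /knot /= mem_nth // size_rcons. Qed.

Lemma knot_index z : z \in 1 :: T -> exists2 i, i <= size T & z = knot n T i.
Proof.
move=> zT; exists (index z (1 :: T)); first by rewrite -ltnS index_mem.
by rewrite knotE ?nth_index // -ltnS index_mem.
Qed.

Lemma mem_cover_path x : reflect
  (x \in T \/ exists2 i, i <= size T & x \in fill k (knot n T i) (knot n T i.+1))
  (x \in cover_path k n T).
Proof.
rewrite mem_sort mem_undup mem_cat; apply: (iffP orP) => -[xT|hx]; [by left| |by left|].
- right; case/flattenP: hx => _ /mapP[i + ->] xi.
  by rewrite mem_iota => /andP[_ iT]; exists i.
- right; case: hx => i iT xi; apply/flattenP; eexists; last exact: xi.
  by apply: (map_f (fun i => fill k (knot n T i) (knot n T i.+1))); rewrite mem_iota.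
Qed.

Lemma cover_path_bounds x : x \in cover_path k n T -> 1 < x <= n.
Proof.
case/mem_cover_path => [xT|[i iT /mem_fill /andP[ax xb]]].
  by case/andP: hT => _ /allP; apply.
by rewrite (leq_ltn_trans (knot_gt0 (leqW iT)) ax) -ltnS (leq_trans xb) ?knot_le_last.
Qed.

Lemma cover_path_tpath : is_tpath n (cover_path k n T).
Proof.
rewrite /is_tpath ltn_sorted_uniq_leq sort_uniq undup_uniq sort_sorted; last exact: leq_total.
by apply/allP => x /cover_path_bounds.
Qed.

Lemma cover_path_covers : covers (cover_path k n T) T.
Proof. by move=> x xT; apply/mem_cover_path; left. Qed.

Lemma size_cover_path_ge : size T <= size (cover_path k n T).
Proof.
apply: uniq_leq_size cover_path_covers.
by case/andP: hT; rewrite ltn_sorted_uniq_leq => /andP[].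
Qed.

Lemma cover_path_window : window_bounded g n (cover_path k n T).
Proof.
move=> x xin.
have [i iT xi] : exists2 i, i <= size T &
    x \in knot n T i :: fill k (knot n T i) (knot n T i.+1).
  case/predU1P: xin => [->|/mem_cover_path[xT|[i iT xi]]].
  - by exists 0; rewrite ?mem_head.
  - have [i iT ->] : exists2 i, i <= size T & x = knot n T i.
      by apply: knot_index; rewrite inE xT orbT.
    by exists i; rewrite ?mem_head.
  - by exists i; rewrite // inE xi orbT.
have ii1 : i < i.+1 <= (size T).+1 by rewrite ltnSn ltnS.
have [y + hy] := fill_next k_gt0 hk (knot_gt0 (leqW iT)) (knot_lt ii1) xi.
rewrite mem_rcons inE => /predU1P[ey|yf]; exists y => //; rewrite mem_rcons inE.
  have := knot_succ_mem iT; rewrite -ey mem_rcons inE => /predU1P[->|yT].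
    by rewrite eqxx.
  by rewrite cover_path_covers ?orbT.
by apply/orP; right; apply/mem_cover_path; right; exists i.
Qed.

End CoverPath.

Local Open Scope ring_scope.

Lemma phatE (R : realType) (p : nat -> nat -> R) g t x :
  phat g p t x = if hprune g t x then p t x else 1.
Proof. by rewrite /phat; case: hprune; rewrite ?mul1r ?subKr ?mul0r ?subr0. Qed.

Lemma weight_phat_gt0 (R : realType) (p : nat -> nat -> R) g n s :
  (forall t t', (1 <= t' < t)%N -> 0 < p t t' < 1) -> is_tpath n s ->
  window_bounded g n s -> 0 < weight (phat g p) n s.
Proof.
move=> hp /andP[ss sb] hw; rewrite /weight big_seq_cond; apply: prodr_gt0 => t.
rewrite mem_index_iota andbT => /andP[t2 tn].
have sbound y : y \in s -> (1 < y <= n)%N by move=> ys; apply: (allP sb).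
move: ss; rewrite ltn_sorted_uniq_leq => /andP[_ ss].
set x := prev_state s t.
have [xs xt] : x \in 1%N :: s /\ (1 <= x < t)%N.
  have := prev_state_in s t; rewrite -/x inE => /orP[/eqP->|]; first by rewrite mem_head.
  rewrite mem_filter => /andP[xt xs]; rewrite inE xs orbT xt andbT.
  by case/andP: (sbound _ xs) => /ltnW.
have /andP[p0 p1] := hp t x xt.
rewrite phatE; case: ifPn => ts; first by case: ifP.
suff -> : hprune g t x by rewrite subr_gt0.
have [y ys /andP[xy yx]] := hw x xs.
rewrite /hprune (ltnW (proj2 (andP xt))) (leq_trans _ yx) // ltnNge; apply/negP => yt.
have yin : y \in s.
  by move: ys; rewrite mem_rcons inE => /predU1P[ey|//]; move: yt tn; rewrite ey; lia.
have yt' : (y < t)%N by rewrite ltn_neqAle yt andbT; apply: contraNneq ts => <-.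
by move: xy; rewrite ltnNge prev_state_max.
Qed.

Section Log2.

Variable R : realType.

Lemma ln2_gt0 : 0 < ln (2 : R).
Proof. by rewrite ln_gt0 // ltr1n. Qed.

Lemma log2_natX m : log2 ((2 ^ m)%:R : R) = m%:R.
Proof. by rewrite /log2 natrX lnXn // mulrnAl mulfV // gt_eqF // ln2_gt0. Qed.

Lemma ltr_log2 : {in Num.pos &, {mono @log2 R : x y / x < y}}.
Proof. by move=> x y x0 y0; rewrite /log2 ltr_pM2r ?invr_gt0 ?ln2_gt0 ?ltr_ln. Qed.

Lemma ler_log2 : {in Num.pos &, {mono @log2 R : x y / x <= y}}.
Proof. by move=> x y x0 y0; rewrite /log2 ler_pM2r ?invr_gt0 ?ln2_gt0 ?ler_ln. Qed.

Lemma ltr_nat_log2 m l : (0 < l)%N -> (m%:R < log2 (l%:R : R)) = (2 ^ m < l)%N.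
Proof. by move=> l0; rewrite -(log2_natX m) ltr_log2 ?posrE ?ltr0n ?expn_gt0 // ltr_nat. Qed.

Lemma ler_nat_log2 m l : (0 < l)%N -> (m%:R <= log2 (l%:R : R)) = (2 ^ m <= l)%N.
Proof.
move=> l0; rewrite -(log2_natX m) !leNgt ltr_log2 ?posrE ?ltr0n ?expn_gt0 //.
by rewrite ltr_nat ltnNge negbK.
Qed.

Lemma log2_ge0 l : (0 < l)%N -> 0 <= log2 (l%:R : R).
Proof. by move=> l0; rewrite -[0]/(0%:R : R) ler_nat_log2 // expn0. Qed.

Lemma floor_log2_nat l : (0 < l)%N -> Num.floor (log2 (l%:R : R)) = (trunc_log 2 l)%:Z.
Proof.
move=> l0; apply: floor_def; rewrite addrC -intS -!pmulrn ler_nat_log2 // trunc_logP //=.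
by rewrite ltNge ler_nat_log2 // -ltnNge trunc_log_ltn.
Qed.

Lemma log2X (x : R) m : 0 < x -> log2 (x ^+ m) = m%:R * log2 x.
Proof. by move=> x0; rewrite /log2 lnXn // mulr_natl mulrnAl. Qed.

Lemma log2_prod (I : Type) (r : seq I) (E : I -> R) : (forall i, 0 < E i) ->
  log2 (\prod_(i <- r) E i) = \sum_(i <- r) log2 (E i).
Proof.
move=> E0; elim: r => [|i r IH]; first by rewrite !big_nil /log2 ln1 mul0r.
by rewrite !big_cons -IH /log2 lnM ?mulrDl // posrE ?E0 ?prodr_gt0.
Qed.

Lemma sum_log2_le (m : nat) (E : 'I_m -> R) : (0 < m)%N -> (forall i, 0 < E i) ->
  \sum_i log2 (E i) <= m%:R * log2 ((\sum_i E i) / m%:R).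
Proof.
move=> m0 E0; have [+ _] := leif_AGM (A := predT) (E := E) (fun i _ => ltW (E0 i)).
rewrite cardT size_enum_ord.
have S0 : 0 < \sum_i E i.
  by rewrite (bigD1 (Ordinal m0)) // ltr_wpDr ?sumr_ge0 // => i _; apply: ltW.
have mu0 : 0 < (\sum_i E i) / m%:R by rewrite divr_gt0 ?ltr0n.
by rewrite -log2_prod // -log2X // ler_log2 ?posrE ?prodr_gt0 ?exprn_gt0.
Qed.

End Log2.

Section UpLog.

Variables (R : realType) (k l : nat).
Hypotheses (k_gt0 : (0 < k)%N) (l_gt0 : (0 < l)%N).

Lemma up_log_pred_lt (N := up_log (2 ^ k) l) : (0 < N)%N ->
  N.-1%:R < log2 (l%:R : R) / k%:R.
Proof.
rewrite up_log_gt0 => /andP[K1 l1].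
by rewrite ltr_pdivlMr ?ltr0n // -natrM ltr_nat_log2 // mulnC expnM up_log_gtn.
Qed.

Lemma up_log_le_log2 : (up_log (2 ^ k) l)%:R <= 1 + log2 (l%:R : R) / k%:R.
Proof.
case: (posnP (up_log (2 ^ k) l)) => [->|N0].
  by apply: addr_ge0; rewrite ?ler01 // divr_ge0 ?ler0n ?log2_ge0.
by rewrite -(prednK N0) -natr1 addrC lerD2l ltW ?up_log_pred_lt.
Qed.

Lemma up_log_le_ceil :
  (up_log (2 ^ k) l)%:R <= (Num.ceil (log2 (l%:R : R) / k%:R))%:~R :> R.
Proof.
case: (posnP (up_log (2 ^ k) l)) => [->|N0].
  by rewrite ler0z ceil_ge0 (lt_le_trans (ltrN10 R)) // divr_ge0 ?ler0n ?log2_ge0.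
have := up_log_pred_lt N0; rewrite pmulrn -ceil_gt_int [(up_log _ _)%:R]pmulrn ler_int.
by move: N0; set c := Num.ceil _; set N := up_log _ _; lia.
Qed.

End UpLog.

Section CoverPathSize.

Variables (R : realType) (k n : nat) (T : seq nat).
Hypotheses (k_gt0 : (0 < k)%N) (n_gt0 : (0 < n)%N) (hT : is_tpath n T).

Let gap (i : 'I_(size T).+1) := (knot n T i.+1 - knot n T i)%N.

Lemma gap_gt0 i : (0 < gap i)%N.
Proof. by rewrite subn_gt0 (knot_lt n_gt0 hT) // ltnSn ltn_ord. Qed.

Lemma sum_gap : (\sum_i gap i)%N = n.
Proof.
rewrite -(big_mkord xpredT (fun i => knot n T i.+1 - knot n T i)%N).
rewrite telescope_sumn_in // ?knot_last ?subn1 // => i /andP[_ iT].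
by rewrite ltnW // (knot_lt n_gt0 hT) // ltnSn.
Qed.

Lemma size_cover_path_log2 : (size (cover_path k n T))%:R <=
  (size T)%:R + (size T).+1%:R * (1 + log2 (n%:R / (size T).+1%:R : R) / k%:R).
Proof.
apply: le_trans (_ : _ <= (size T)%:R + \sum_i (up_log (2 ^ k) (gap i))%:R) _.
  by rewrite -natr_sum -natrD ler_nat size_cover_path_le.
rewrite lerD2l mulrDr mulr1.
apply: le_trans (_ : _ <= \sum_i (1 + log2 (gap i)%:R / k%:R)) _.
  by apply: ler_sum => i _; apply: up_log_le_log2; rewrite ?gap_gt0.
rewrite big_split /= sumr_const card_ord lerD2l -mulr_suml mulrA.
rewrite ler_pM2r ?invr_gt0 ?ltr0n // -sum_gap natr_sum.
by apply: sum_log2_le => // i; rewrite ltr0n gap_gt0.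
Qed.

End CoverPathSize.

Lemma size_cover_path_nil (R : realType) k n : (0 < k)%N -> (0 < n)%N ->
  (size (cover_path k n [::]))%:R <= (Num.ceil (log2 (n%:R : R) / k%:R))%:~R :> R.
Proof.
move=> k_gt0 n_gt0; apply: le_trans (up_log_le_ceil R k_gt0 n_gt0).
by have := size_cover_path_le k n [::]; rewrite big_ord1 /= subn1 ler_nat.
Qed.

Theorem lemma4 (R : realType) (p : nat -> nat -> R)
  (hp : forall t t' : nat, (1 <= t' < t)%N -> 0 < p t t' < 1)
  (g n : nat) (hg : (1 <= g)%N) (hn : (1 <= n)%N)
  (T : seq nat) (hT : is_tpath n T) :
  exists Th : seq nat,
    [/\ is_tpath n Th,
        0 < weight (phat g p) n Th,
        covers Th T,
        (nswitch T <= nswitch Th)%N &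
        (nswitch Th)%:R <= ((nswitch T).+1)%:R * Lbound g (nswitch T) n - 1 :> R].
Proof.
set k := trunc_log 2 g.+1.
have k_gt0 : (0 < k)%N by apply: trunc_log_max; rewrite // expn1 ltnS.
have hk : (2 ^ k <= g.+1)%N by apply: trunc_logP.
have Th_path := cover_path_tpath k hn hT.
exists (cover_path k n T); split => //.
- exact: weight_phat_gt0 Th_path (cover_path_window k_gt0 hk hn hT).
- exact: cover_path_covers.
- exact: size_cover_path_ge.
rewrite /nswitch /Lbound floor_log2_nat // -/k -pmulrn.
case: eqP => [/size0nil T0|_].
  by rewrite T0 mul1r addrK size_cover_path_nil.
have := size_cover_path_log2 R k_gt0 hn hT; rewrite -natr1; lra.
Qed.
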